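(* There is an absolute constant $c>0$ such that the following holds. Let $q,p$ be positive integers with $q/2<p<2q$, let $W\subseteq\{0,1,\dots,q-1\}$, and let $b_1,b_2$ be integers with $\gcd(b_1,q)=\gcd(b_2,p)=1$. Then $$\sum_{a\in\mathbb{Z},\ |a|<q/2}\left|f_W\left(\frac{b_1a}{q}\right)\right|\,\left|f_W\left(\frac{b_2a}{p}\right)\right|\ \le\ c\, q|W|.$$
   Context: $e(u)=\exp(2\pi i u)$ and, for a finite set of integers $W$, $f_W(t)=\sum_{s\in W}e(st)$. *)

From Stdlib Require Import Reals Lra Lia ZArith List.
Open Scope R_scope.

(* Real and imaginary parts of f_W(t) = sum_{s in W} e(s t), e(u) = exp(2 pi i u). *)
Definition fW_re (W : list Z) (t : R) : R :=
  fold_right Rplus 0 (map (fun s => cos (2 * PI * IZR s * t)) W).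
Definition fW_im (W : list Z) (t : R) : R :=
  fold_right Rplus 0 (map (fun s => sin (2 * PI * IZR s * t)) W).

Definition abs_fW (W : list Z) (t : R) : R :=
  sqrt (fW_re W t ^ 2 + fW_im W t ^ 2).

Definition range_half (q : Z) : list Z :=
  filter (fun a => (2 * Z.abs a <? q)%Z)
         (map (fun k => (Z.of_nat k - q)%Z) (seq 0 (Z.to_nat (2 * q + 1)))).

Definition corr_sum (W : list Z) (q p b1 b2 : Z) : R :=
  fold_right Rplus 0
    (map (fun a => abs_fW W (IZR (b1 * a) / IZR q) * abs_fW W (IZR (b2 * a) / IZR p))
         (range_half q)).

From Stdlib Require Import Reals ZArith List Lra Lia.
Open Scope R_scope.

(* By AM-GM the sum is at most half the sum of the two second moments
   sum_{|a| < q/2} |f_W(b a / m)|^2, for (b, m) = (b1, q) and (b2, p).  Since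
   q < 2m, the range of a fits into 4m consecutive integers, i.e. four full
   periods of a |-> f_W(b a / m); there orthogonality of additive characters
   turns the moment into 4m times the number of pairs (s, s') in W^2 with
   m | b (s - s'), i.e. m | s - s' as gcd(b, m) = 1.  As W lies in [0, 2m),
   every s has at most two such partners s', so each moment is at most
   8 m |W| and the sum is at most 4 (q + p) |W| <= 12 q |W|. *)

Lemma sin_period_Z (x : R) (k : Z) : sin (x + 2 * IZR k * PI) = sin x.
Proof.
  apply Rminus_diag_uniq; rewrite form4.
  replace ((x + 2 * IZR k * PI - x) / 2) with (IZR k * PI) by field.
  rewrite sin_eq_0_1 by (exists k; reflexivity); ring.
Qed.

Lemma cos_period_Z (x : R) (k : Z) : cos (x + 2 * IZR k * PI) = cos x.
Proof.
  apply Rminus_diag_uniq; rewrite form2.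
  replace ((x + 2 * IZR k * PI - x) / 2) with (IZR k * PI) by field.
  rewrite sin_eq_0_1 by (exists k; reflexivity); ring.
Qed.

Definition lsum {A : Type} (f : A -> R) (l : list A) : R :=
  fold_right Rplus 0 (map f l).

Section ListSums.

Context {A : Type}.

Lemma lsum_cons (f : A -> R) (a : A) (l : list A) : lsum f (a :: l) = f a + lsum f l.
Proof. reflexivity. Qed.

Lemma lsum_app (f : A -> R) (l1 l2 : list A) : lsum f (l1 ++ l2) = lsum f l1 + lsum f l2.
Proof.
  induction l1 as [|a l1 IH]; [unfold lsum; cbn; ring|].
  rewrite <- app_comm_cons, !lsum_cons, IH; ring.
Qed.

Lemma lsum_ext (f g : A -> R) (l : list A) :
  (forall x, In x l -> f x = g x) -> lsum f l = lsum g l.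
Proof.
  induction l as [|a l IH]; intros H; [reflexivity|].
  rewrite !lsum_cons, H by now left.
  f_equal; apply IH; intros; apply H; now right.
Qed.

Lemma lsum_le (f g : A -> R) (l : list A) :
  (forall x, In x l -> f x <= g x) -> lsum f l <= lsum g l.
Proof.
  induction l as [|a l IH]; intros H; [unfold lsum; cbn; lra|]. rewrite !lsum_cons.
  apply Rplus_le_compat; [apply H; now left | apply IH; intros; apply H; now right].
Qed.

Lemma lsum_nonneg (f : A -> R) (l : list A) :
  (forall x, In x l -> 0 <= f x) -> 0 <= lsum f l.
Proof.
  induction l as [|a l IH]; intros H; [unfold lsum; cbn; lra|]. rewrite lsum_cons.
  apply Rplus_le_le_0_compat; [apply H; now left | apply IH; intros; apply H; now right].
Qed.

Lemma lsum_plus (f g : A -> R) (l : list A) :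
  lsum (fun x => f x + g x) l = lsum f l + lsum g l.
Proof. induction l as [|a l IH]; [unfold lsum; cbn; ring|]. rewrite !lsum_cons, IH; ring. Qed.

Lemma lsum_scal (c : R) (f : A -> R) (l : list A) :
  lsum (fun x => c * f x) l = c * lsum f l.
Proof. induction l as [|a l IH]; [unfold lsum; cbn; ring|]. rewrite !lsum_cons, IH; ring. Qed.

Lemma lsum_const (c : R) (l : list A) : lsum (fun _ => c) l = c * INR (length l).
Proof.
  induction l as [|a l IH]; [unfold lsum; cbn; ring|].
  rewrite lsum_cons, IH, length_cons, S_INR; ring.
Qed.

Lemma lsum_filter_le (f : A -> R) (P : A -> bool) (l : list A) :
  (forall x, In x l -> 0 <= f x) -> lsum f (filter P l) <= lsum f l.
Proof.
  induction l as [|a l IH]; intros H; [unfold lsum; cbn; lra|]. cbn [filter].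
  assert (0 <= f a) by (apply H; now left).
  assert (lsum f (filter P l) <= lsum f l) by (apply IH; intros; apply H; now right).
  destruct (P a); rewrite ?lsum_cons; lra.
Qed.

Lemma lsum_mul_le_half_sum_sqr (f g : A -> R) (l : list A) :
  lsum (fun x => f x * g x) l <= / 2 * (lsum (fun x => f x ^ 2) l + lsum (fun x => g x ^ 2) l).
Proof.
  rewrite <- lsum_plus, <- lsum_scal. apply lsum_le; intros x _.
  pose proof (pow2_ge_0 (f x - g x)); nra.
Qed.

End ListSums.

Lemma lsum_map {A B : Type} (f : B -> R) (h : A -> B) (l : list A) :
  lsum f (map h l) = lsum (fun x => f (h x)) l.
Proof. unfold lsum; now rewrite map_map. Qed.

Lemma lsum_mul {A B : Type} (f : A -> R) (g : B -> R) (l : list A) (l' : list B) :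
  lsum f l * lsum g l' = lsum (fun x => lsum (fun y => f x * g y) l') l.
Proof.
  induction l as [|a l IH]; [unfold lsum; cbn; ring|].
  rewrite !lsum_cons, Rmult_plus_distr_r, IH, lsum_scal; reflexivity.
Qed.

Lemma lsum_swap {A B : Type} (F : A -> B -> R) (l : list A) (l' : list B) :
  lsum (fun x => lsum (fun y => F x y) l') l = lsum (fun y => lsum (fun x => F x y) l) l'.
Proof.
  induction l as [|a l IH].
  - rewrite (lsum_ext (fun y => lsum (fun x => F x y) nil) (fun _ => 0)), lsum_const
      by reflexivity.
    unfold lsum at 1; cbn; ring.
  - rewrite lsum_cons, IH, <- lsum_plus; reflexivity.
Qed.

Lemma lsum_telescope (g : nat -> R) (n : nat) :
  lsum (fun k => g (S k) - g k) (seq 0 n) = g n - g 0%nat.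
Proof.
  induction n as [|n IH]; [unfold lsum; cbn; ring|].
  rewrite seq_S, lsum_app, IH; cbn; ring.
Qed.

(* 2 sin a cos(2 a y) = sin(2 a y + a) - sin(2 a y - a) telescopes along y = k - x. *)
Lemma sum_cos_arith_telescope (a x : R) (N : nat) :
  2 * sin a * lsum (fun k => cos (2 * a * (INR k - x))) (seq 0 N)
  = sin (a * (2 * (INR N - x) - 1)) - sin (a * (2 * (0 - x) - 1)).
Proof.
  rewrite <- lsum_scal.
  rewrite <- (lsum_telescope (fun k => sin (a * (2 * (INR k - x) - 1)))).
  apply lsum_ext; intros k _; rewrite S_INR.
  replace (a * (2 * (INR k + 1 - x) - 1)) with (2 * a * (INR k - x) + a) by ring.
  replace (a * (2 * (INR k - x) - 1)) with (2 * a * (INR k - x) - a) by ring.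
  rewrite sin_plus, sin_minus; ring.
Qed.

Lemma sin_PI_div_neq0 (j m : Z) :
  (0 < m)%Z -> (j mod m <> 0)%Z -> sin (PI * IZR j / IZR m) <> 0.
Proof.
  intros Hm Hj Hsin. apply Hj.
  assert (Hm' : IZR m <> 0) by (apply not_0_IZR; lia).
  destruct (sin_eq_0_0 _ Hsin) as [k Hk].
  assert (Hjk : IZR j = IZR (k * m)).
  { rewrite mult_IZR. apply (Rmult_eq_reg_l PI); [|apply PI_neq0].
    apply (Rmult_eq_reg_r (/ IZR m)); [|now apply Rinv_neq_0_compat].
    unfold Rdiv in Hk; rewrite Hk; field; exact Hm'. }
  apply eq_IZR in Hjk; subst j. apply Z.mod_mul; lia.
Qed.

Lemma sum_cos_full_periods (j k0 m : Z) (n : nat) : (0 < m)%Z ->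
  lsum (fun k => cos (2 * PI * IZR j * (INR k - IZR k0) / IZR m)) (seq 0 (n * Z.to_nat m))
  = if (j mod m =? 0)%Z then INR n * IZR m else 0.
Proof.
  intros Hm. assert (Hm' : IZR m <> 0) by (apply not_0_IZR; lia).
  assert (HN : INR (n * Z.to_nat m) = INR n * IZR m)
    by (rewrite mult_INR, (INR_IZR_INZ (Z.to_nat m)), Z2Nat.id by lia; reflexivity).
  destruct (Z.eqb_spec (j mod m) 0) as [Hj|Hj].
  - rewrite (lsum_ext _ (fun _ => 1)), lsum_const, length_seq, HN by
      (intros k _; rewrite (Z.div_mod j m), Hj, Z.add_0_r by lia;
       rewrite <- cos_0, <- (cos_period_Z 0 ((j / m) * (Z.of_nat k - k0)));
       f_equal; rewrite INR_IZR_INZ, !mult_IZR, minus_IZR; field; exact Hm').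
    ring.
  - set (a := PI * IZR j / IZR m).
    pose proof (sum_cos_arith_telescope a (IZR k0) (n * Z.to_nat m)) as Htel.
    rewrite HN in Htel.
    replace (a * (2 * (INR n * IZR m - IZR k0) - 1))
      with (a * (2 * (0 - IZR k0) - 1) + 2 * IZR (j * Z.of_nat n) * PI) in Htel
      by (unfold a; rewrite mult_IZR, <- INR_IZR_INZ; field; exact Hm').
    rewrite sin_period_Z, Rminus_diag in Htel.
    rewrite (lsum_ext _ (fun k => cos (2 * a * (INR k - IZR k0))))
      by (intros k _; unfold a; f_equal; field; exact Hm').
    destruct (Rmult_integral _ _ Htel) as [H|H]; [|exact H].
    exfalso; apply (sin_PI_div_neq0 j m Hm Hj); fold a; lra.
Qed.

Lemma abs_fW_sqr (W : list Z) (t : R) :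
  abs_fW W t ^ 2 = lsum (fun s => lsum (fun s' => cos (2 * PI * IZR (s - s') * t)) W) W.
Proof.
  unfold abs_fW. rewrite pow2_sqrt by (apply Rplus_le_le_0_compat; apply pow2_ge_0).
  change (fW_re W t) with (lsum (fun s => cos (2 * PI * IZR s * t)) W).
  change (fW_im W t) with (lsum (fun s => sin (2 * PI * IZR s * t)) W).
  rewrite <- !Rsqr_pow2; unfold Rsqr. rewrite !lsum_mul, <- lsum_plus.
  apply lsum_ext; intros s _. rewrite <- lsum_plus. apply lsum_ext; intros s' _.
  rewrite minus_IZR, <- cos_minus; f_equal; ring.
Qed.

Definition collisions (W : list Z) (b m : Z) : R :=
  lsum (fun s => lsum (fun s' => if ((b * (s - s')) mod m =? 0)%Z then 1 else 0) W) W.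

Lemma sum_sqr_abs_fW_full_periods (W : list Z) (b m k0 : Z) (n : nat) : (0 < m)%Z ->
  lsum (fun k => abs_fW W (IZR (b * (Z.of_nat k - k0)) / IZR m) ^ 2) (seq 0 (n * Z.to_nat m))
  = INR n * IZR m * collisions W b m.
Proof.
  intros Hm. assert (Hm' : IZR m <> 0) by (apply not_0_IZR; lia).
  rewrite (lsum_ext _ _ _ (fun k _ => abs_fW_sqr W _)).
  unfold collisions. rewrite <- lsum_scal, lsum_swap. apply lsum_ext; intros s _.
  rewrite <- lsum_scal, lsum_swap. apply lsum_ext; intros s' _.
  replace (INR n * IZR m * (if ((b * (s - s')) mod m =? 0)%Z then 1 else 0))
    with (if ((b * (s - s')) mod m =? 0)%Z then INR n * IZR m else 0)
    by (destruct (_ =? _)%Z; ring).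
  rewrite <- (sum_cos_full_periods (b * (s - s')) k0 m n Hm).
  apply lsum_ext; intros k _. f_equal.
  rewrite INR_IZR_INZ, !mult_IZR, !minus_IZR; field; exact Hm'.
Qed.

Lemma lsum_indicator_NoDup_le1 (W : list Z) (r : Z) :
  NoDup W -> lsum (fun s => if Z.eq_dec s r then 1 else 0) W <= 1.
Proof.
  intros HW.
  assert (Hcount : lsum (fun s => if Z.eq_dec s r then 1 else 0) W
                   = INR (count_occ Z.eq_dec W r)).
  { clear HW. induction W as [|s W IH]; [reflexivity|].
    rewrite lsum_cons, IH; cbn [count_occ]; destruct (Z.eq_dec s r); [rewrite S_INR|]; ring. }
  rewrite Hcount. apply (NoDup_count_occ Z.eq_dec) with (x := r), le_INR in HW. exact HW.
Qed.

Lemma congruent_in_double_range (m b s s' : Z) : (0 < m)%Z -> Z.gcd b m = 1%Z ->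
  (0 <= s < 2 * m)%Z -> (0 <= s' < 2 * m)%Z -> ((b * (s - s')) mod m = 0)%Z ->
  s' = (s mod m)%Z \/ s' = (s mod m + m)%Z.
Proof.
  intros Hm Hb Hs Hs' Hdiv.
  apply Z.mod_divide in Hdiv; [|lia].
  apply Z.gauss in Hdiv; [|now rewrite Z.gcd_comm].
  destruct Hdiv as [k Hk].
  pose proof (Z.div_mod s m ltac:(lia)). pose proof (Z.mod_pos_bound s m Hm).
  assert (Hq : (0 <= s / m < 2)%Z) by (split; [apply Z.div_pos | apply Z.div_lt_upper_bound]; lia).
  assert (Hk' : (s / m - k = 0 \/ s / m - k = 1)%Z) by nia.
  destruct Hk' as [Hk' | Hk']; [left | right]; nia.
Qed.

Lemma collisions_le (W : list Z) (b m : Z) : (0 < m)%Z -> Z.gcd b m = 1%Z -> NoDup W ->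
  (forall s, In s W -> (0 <= s < 2 * m)%Z) -> collisions W b m <= 2 * INR (length W).
Proof.
  intros Hm Hb HN HW. unfold collisions. rewrite <- lsum_const.
  apply lsum_le; intros s Hs.
  apply Rle_trans with (lsum (fun s' => (if Z.eq_dec s' (s mod m) then 1 else 0)
                                       + (if Z.eq_dec s' (s mod m + m) then 1 else 0)) W).
  - apply lsum_le; intros s' Hs'.
    destruct (Z.eqb_spec ((b * (s - s')) mod m) 0) as [E|E];
      destruct (Z.eq_dec s' (s mod m)), (Z.eq_dec s' (s mod m + m)); try lra.
    exfalso; destruct (congruent_in_double_range m b s s'); auto.
  - rewrite lsum_plus.
    pose proof (lsum_indicator_NoDup_le1 W (s mod m) HN).
    pose proof (lsum_indicator_NoDup_le1 W (s mod m + m) HN).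
    lra.
Qed.

Lemma lsum_range_half_le (g : Z -> R) (q : Z) (M : nat) : (forall x, 0 <= g x) ->
  (Z.to_nat (2 * q + 1) <= M)%nat ->
  lsum g (range_half q) <= lsum (fun k => g (Z.of_nat k - q)%Z) (seq 0 M).
Proof.
  intros Hg HM. unfold range_half.
  eapply Rle_trans; [apply lsum_filter_le; intros; apply Hg|].
  rewrite lsum_map, <- (Nat.sub_add _ _ HM), Nat.add_comm, seq_app, lsum_app.
  pose proof (lsum_nonneg (fun k => g (Z.of_nat k - q)%Z)
                (seq (0 + Z.to_nat (2 * q + 1)) (M - Z.to_nat (2 * q + 1)))
                (fun k _ => Hg _)).
  lra.
Qed.

Lemma sum_range_half_sqr_abs_fW_le (W : list Z) (q m b : Z) :
  (0 < q)%Z -> (q < 2 * m)%Z -> NoDup W -> (forall s, In s W -> (0 <= s < q)%Z) ->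
  Z.gcd b m = 1%Z ->
  lsum (fun a => abs_fW W (IZR (b * a) / IZR m) ^ 2) (range_half q)
  <= 8 * IZR m * INR (length W).
Proof.
  intros Hq Hqm HN HW Hb.
  eapply Rle_trans.
  { apply (lsum_range_half_le (fun a => abs_fW W (IZR (b * a) / IZR m) ^ 2) q (4 * Z.to_nat m)).
    - intros; apply pow2_ge_0.
    - lia. }
  rewrite sum_sqr_abs_fW_full_periods by lia.
  pose proof (collisions_le W b m ltac:(lia) Hb HN ltac:(intros s Hs; specialize (HW s Hs); lia)).
  assert (0 <= IZR m) by (apply IZR_le; lia).
  cbn [INR]; nra.
Qed.

Theorem corollary2 :
  exists c : R, 0 < c /\
    forall (q p : Z) (W : list Z) (b1 b2 : Z),
      (0 < q)%Z -> (0 < p)%Z ->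
      (q < 2 * p)%Z -> (p < 2 * q)%Z ->
      NoDup W -> (forall s, In s W -> (0 <= s < q)%Z) ->
      Z.gcd b1 q = 1%Z -> Z.gcd b2 p = 1%Z ->
      corr_sum W q p b1 b2 <= c * IZR q * INR (length W).
Proof.
  exists 12. split; [lra|].
  intros q p W b1 b2 Hq Hp Hqp Hpq HN HW Hb1 Hb2.
  change (corr_sum W q p b1 b2) with
    (lsum (fun a => abs_fW W (IZR (b1 * a) / IZR q) * abs_fW W (IZR (b2 * a) / IZR p))
          (range_half q)).
  eapply Rle_trans; [apply lsum_mul_le_half_sum_sqr|].
  pose proof (sum_range_half_sqr_abs_fW_le W q q b1 Hq ltac:(lia) HN HW Hb1).
  pose proof (sum_range_half_sqr_abs_fW_le W q p b2 Hq Hqp HN HW Hb2).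
  assert (IZR p <= 2 * IZR q) by (rewrite <- mult_IZR; apply IZR_le; lia).
  pose proof (pos_INR (length W)).
  nra.
Qed.
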